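(* Every dp-minimal integral domain $R$ is divided: for every prime ideal $\mathfrak p$ of $R$ and every $a\in R$, either $\mathfrak p\subseteq aR$ or $aR\subseteq\mathfrak p$ (equivalently, $\mathfrak p=\mathfrak pR_{\mathfrak p}$). In particular, there exists $N\in\mathbb N$ such that for all $a,b$ in the maximal ideal of $R$, either $a\in bR$ or $b^N\in aR$.
   Context: Rings are commutative with identity; dp-minimal means the theory in the language of rings has dp-rank $1$ (such domains are local). A prime ideal $\mathfrak p$ is divided if it is comparable under inclusion with every principal ideal; a ring is divided if every prime ideal is divided. *)

From HB Require Import structures.
From mathcomp Require Import all_boot all_algebra.
Set Implicit Arguments. Unset Strict Implicit. Unset Printing Implicit Defensive.
Import GRing.Theory.
Local Open Scope ring_scope.

Definition is_ideal (R : comRingType) (I : R -> Prop) : Prop :=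
  [/\ I 0, (forall x y, I x -> I y -> I (x + y)) &
      (forall r x, I x -> I (r * x))].

Definition is_prime_ideal (R : comRingType) (P : R -> Prop) : Prop :=
  [/\ is_ideal P, ~ P 1 & (forall x y, P (x * y) -> P x \/ P y)].

Definition is_maximal_ideal (R : comRingType) (M : R -> Prop) : Prop :=
  [/\ is_ideal M, ~ M 1 &
      (forall J : R -> Prop, is_ideal J -> (forall x, M x -> J x) ->
         (forall x, J x <-> M x) \/ J 1)].

Definition in_principal (R : comRingType) (a x : R) : Prop :=
  exists r : R, x = a * r.

(* de Bruijn variables: variable 0 is the innermost bound / first free var *)
Inductive rterm : Type :=
| TVar of nat
| TZero | TOne
| TAdd of rterm & rterm
| TOpp of rterm
| TMul of rterm & rterm.

Inductive rform : Type :=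
| FEq of rterm & rterm
| FNot of rform
| FAnd of rform & rform
| FOr of rform & rform
| FEx of rform
| FAll of rform.

Definition env_cons (R : Type) (a : R) (e : nat -> R) : nat -> R :=
  fun i => match i with 0%N => a | k.+1 => e k end.

Fixpoint eval_term (R : comRingType) (e : nat -> R) (t : rterm) : R :=
  match t with
  | TVar i => e i
  | TZero => 0
  | TOne => 1
  | TAdd t1 t2 => eval_term e t1 + eval_term e t2
  | TOpp t1 => - eval_term e t1
  | TMul t1 t2 => eval_term e t1 * eval_term e t2
  end.

Fixpoint holds (R : comRingType) (e : nat -> R) (f : rform) : Prop :=
  match f with
  | FEq t1 t2 => eval_term e t1 = eval_term e t2
  | FNot g => ~ holds e g
  | FAnd g h => holds e g /\ holds e h
  | FOr g h => holds e g \/ holds e h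
  | FEx g => exists x : R, holds (env_cons x e) g
  | FAll g => forall x : R, holds (env_cons x e) g
  end.

(* A formula phi(x; y) with x = variable 0 (a single object variable) and
   parameter tuple y = variables 1, 2, ...;  phi(a; b) := holds (a :: b) phi. *)
Definition sat (R : comRingType) (phi : rform) (a : R) (b : nat -> R) : Prop :=
  holds (env_cons a b) phi.

Definition has_ict_pattern2 (R : comRingType) (phi psi : rform) (n : nat) : Prop :=
  exists (b c : nat -> nat -> R),
    forall i j, (i < n)%N -> (j < n)%N ->
      exists a : R, forall k, (k < n)%N ->
        (sat phi a (b k) <-> k = i) /\ (sat psi a (c k) <-> k = j).

(* dp-minimality of Th(R) (language of rings): there is no ict-pattern of
   depth 2 in one variable in a monster model of Th(R); by compactness and
   completeness of Th(R), equivalently, for every pair of formulas the finite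
   patterns realized in R itself have bounded size. *)
Definition dp_minimal (R : comRingType) : Prop :=
  forall phi psi : rform, exists n : nat, ~ has_ict_pattern2 R phi psi n.

Set Warnings "-notation-overridden,-ambiguous-paths".
From HB Require Import structures.
From mathcomp Require Import all_boot all_algebra.
From mathcomp Require Import zify ring.
From Stdlib Require Import Classical.

Set Implicit Arguments. Unset Strict Implicit. Unset Printing Implicit Defensive.
Import GRing.Theory.
Local Open Scope ring_scope.

(* The formula  x ∈ (y0, y1) ∧ x ∉ (y0, y2)  with parameters (0, s^k, s^(k+1))
   cuts out the k-th layer s^k R \ s^(k+1) R of the s-adic filtration.
   If s and 1 - s were both nonunits, the elements s^i (1 - s)^j would lie in
   the i-th s-adic and the j-th (1 - s)-adic layer, giving ict-patterns of any
   size; hence R is local.  Now let n bound the patterns of this formula and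
   suppose a ∉ bR and b^(2n) ∉ aR.  For i, j < n the element a b^j + b^(n+i)
   lies in the j-th b-adic layer and, by Nakayama's lemma in the local ring R,
   in the i-th layer of the filtration (a, b^(n+l)), a pattern of size n.  So
   a ∈ bR or b^(2n) ∈ aR for all a, b, and a prime P is divided: if a ∉ P and
   x ∈ P \ aR, then a^(2n) ∈ xR ⊆ P. *)

Definition in_ideal2 (R : comNzRingType) (p q x : R) : Prop :=
  exists u v, x = p * u + q * v.

(* Under the two binders, TVar 2 is x and TVar 3, 4, 5 are y0, y1, y2. *)
Definition layer_form : rform :=
  FAnd (FEx (FEx (FEq (TVar 2) (TAdd (TMul (TVar 3) (TVar 1)) (TMul (TVar 4) (TVar 0))))))
       (FNot (FEx (FEx (FEq (TVar 2) (TAdd (TMul (TVar 3) (TVar 1)) (TMul (TVar 5) (TVar 0))))))).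

Definition params3 (T : Type) (p q r : T) : nat -> T :=
  fun i => match i with 0%N => p | 1%N => q | _ => r end.

Lemma sat_layer_form (R : comNzRingType) (x p q r : R) :
  sat layer_form x (params3 p q r) <-> in_ideal2 p q x /\ ~ in_ideal2 p r x.
Proof. by []. Qed.

Lemma sat_layer_form_level (R : comNzRingType) (p x : R) (f : nat -> R) (i k : nat) :
  (forall m, in_ideal2 p (f m) x <-> (m <= i)%N) ->
  sat layer_form x (params3 p (f k) (f k.+1)) <-> k = i.
Proof. by move=> level; rewrite sat_layer_form !level; split=> [[]|->]; lia. Qed.

Lemma in_ideal20 (R : comNzRingType) (q x : R) : in_ideal2 0 q x <-> in_principal q x.
Proof.
split=> [[u [v ->]]|[v ->]]; first by exists v; rewrite mul0r add0r.
by exists 0, v; rewrite mul0r add0r.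
Qed.

Lemma in_ideal2_addl (R : comNzRingType) (a q c x : R) :
  in_ideal2 a q (a * c + x) <-> in_ideal2 a q x.
Proof.
split=> [[u [v E]] | [u [v ->]]]; last by exists (c + u), v; rewrite mulrDr addrA.
by exists (u - c), v; apply: (addrI (a * c)); rewrite E; ring.
Qed.

Lemma in_principal_exp_mul (R : idomainType) (s w : R) (i k : nat) :
  s != 0 -> ~ in_principal s w ->
  in_principal (s ^+ k) (s ^+ i * w) <-> (k <= i)%N.
Proof.
move=> s0 w_notin; split=> [[v Ev] | le_ki]; last first.
  by exists (s ^+ (i - k) * w); rewrite mulrA -exprD subnKC.
rewrite leqNgt; apply/negP => lt_ik; apply: w_notin.
exists (s ^+ (k - i).-1 * v).
have Esk : s ^+ k = s ^+ i * (s * s ^+ (k - i).-1).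
  by rewrite -exprS prednK ?subn_gt0 // -exprD subnKC // ltnW.
by move: Ev; rewrite Esk -mulrA => /(mulfI (expf_neq0 i s0)) ->; rewrite mulrA.
Qed.

Lemma one_subr_exp (R : comNzRingType) (s : R) (j : nat) :
  exists r, (1 - s) ^+ j = 1 - s * r.
Proof.
elim: j => [|j [r Er]]; first by exists 0; rewrite expr0 mulr0 subr0.
by exists (r + 1 - s * r); rewrite exprS Er; ring.
Qed.

Lemma exp_one_subr_notin (R : comUnitRingType) (s : R) (j : nat) :
  s \isn't a GRing.unit -> ~ in_principal s ((1 - s) ^+ j).
Proof.
move=> /negP s_nonunit [r' Er']; have [r Er] := one_subr_exp s j.
apply: s_nonunit; apply/unitrP; exists (r' + r).
by split; [rewrite mulrC|]; rewrite mulrDr -Er' Er; ring.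
Qed.

Section LocalRing.

Variable R : comUnitRingType.
Hypothesis local : forall s : R, s \is a GRing.unit \/ (1 - s) \is a GRing.unit.

Lemma in_principal_cancel_nonunit (a y u z : R) :
  z \isn't a GRing.unit -> y = a * u + y * z -> in_principal a y.
Proof.
move=> /negP z_nonunit Ey; have [//|unit_1z] := local z.
have Ey' : y * (1 - z) = a * u by rewrite mulrBr mulr1 {1}Ey addrK.
by exists (u / (1 - z)); rewrite mulrA -Ey' mulrK.
Qed.

Lemma in_ideal2_exp (a b : R) (p m : nat) :
  b \isn't a GRing.unit -> ~ in_principal a (b ^+ p) ->
  in_ideal2 a (b ^+ m) (b ^+ p) <-> (m <= p)%N.
Proof.
move=> b_nonunit bp_notin; split=> [[u [v Ebp]] | le_mp]; last first.
  by exists 0, (b ^+ (p - m)); rewrite mulr0 add0r -exprD subnKC.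
rewrite leqNgt; apply/negP => lt_pm; apply: bp_notin.
apply: (@in_principal_cancel_nonunit _ _ u (b ^+ (m - p) * v)).
  by rewrite unitrM unitrX_pos ?subn_gt0 // (negbTE b_nonunit).
by rewrite mulrA -exprD subnKC // ltnW.
Qed.

End LocalRing.

Lemma prime_idealX (R : comNzRingType) (P : R -> Prop) (a : R) (n : nat) :
  is_prime_ideal P -> P (a ^+ n) -> P a.
Proof.
case=> _ P1_false P_prime; elim: n => [|n IH]; first by rewrite expr0 => /P1_false.
by rewrite exprS => /P_prime [].
Qed.

Lemma prime_ideal_divided (R : comNzRingType) (N : nat) :
  (forall a b : R, in_principal b a \/ in_principal a (b ^+ N)) ->
  forall P : R -> Prop, is_prime_ideal P -> forall a : R,
    (forall x, P x -> in_principal a x) \/ (forall x, in_principal a x -> P x).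
Proof.
move=> dvd_or_exp P P_prime a; have [[_ _ P_mul] _ _] := P_prime.
case: (classic (P a)) => [Pa | Pa_false].
  by right=> x [r ->]; rewrite mulrC; apply: P_mul.
left=> x Px; case: (dvd_or_exp x a) => // -[r Er]; exfalso.
apply: Pa_false (prime_idealX (n := N) P_prime _).
by rewrite Er mulrC; apply: P_mul.
Qed.

Section DpMinimal.

Variable R : idomainType.
Hypothesis hdp : dp_minimal R.

Lemma dp_minimal_local (s : R) : s \is a GRing.unit \/ (1 - s) \is a GRing.unit.
Proof.
have [n no_pattern] := hdp layer_form layer_form.
case: (boolP (s \is a GRing.unit)) => [|s_nonunit]; first by left.
case: (boolP ((1 - s) \is a GRing.unit)) => [|t_nonunit]; first by right.
exfalso; apply: no_pattern.
have s0 : s != 0 by apply: contraNneq t_nonunit => ->; rewrite subr0 unitr1.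
have t0 : 1 - s != 0.
  by apply: contraNneq s_nonunit => /eqP; rewrite subr_eq0 => /eqP <-; rewrite unitr1.
exists (fun k => params3 0 (s ^+ k) (s ^+ k.+1)),
       (fun k => params3 0 ((1 - s) ^+ k) ((1 - s) ^+ k.+1)).
move=> i j _ _; exists (s ^+ i * (1 - s) ^+ j) => k _.
split; apply: (sat_layer_form_level (f := fun l => _ ^+ l)) => m; rewrite in_ideal20.
  exact: in_principal_exp_mul _ _ s0 (exp_one_subr_notin s_nonunit).
rewrite mulrC; apply: in_principal_exp_mul _ _ t0 _.
by have := exp_one_subr_notin (j := i) t_nonunit; rewrite subKr.
Qed.

Lemma dp_minimal_dvd_or_exp_dvd :
  exists N : nat, forall a b : R, in_principal b a \/ in_principal a (b ^+ N).
Proof.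
have [n no_pattern] := hdp layer_form layer_form.
exists (n + n)%N => a b.
case: (classic (in_principal b a)) => [|a_notin]; first by left.
case: (classic (in_principal a (b ^+ (n + n)))) => [|b2n_notin]; first by right.
exfalso; apply: no_pattern.
have b_nonunit : b \isn't a GRing.unit.
  by apply/negP => b_unit; apply: a_notin; exists (b^-1 * a); rewrite mulrA mulrV // mul1r.
have bni_notin i : (i < n)%N -> ~ in_principal a (b ^+ (n + i)).
  move=> lt_in [r Er]; apply: b2n_notin; exists (r * b ^+ (n - i)).
  by rewrite mulrA -Er -exprD -addnA subnKC // ltnW.
exists (fun k => params3 0 (b ^+ k) (b ^+ k.+1)),
       (fun l => params3 a (b ^+ (n + l)) (b ^+ (n + l.+1))).
move=> j i lt_jn lt_in; exists (a * b ^+ j + b ^+ (n + i)) => k _; split.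
- apply: (sat_layer_form_level (f := fun l => b ^+ l)) => m; rewrite in_ideal20.
  have -> : a * b ^+ j + b ^+ (n + i) = b ^+ j * (a + b ^+ (n + i - j)).
    by rewrite mulrDr -exprD subnKC ?(mulrC a) //; lia.
  apply: in_principal_exp_mul.
    apply/eqP => b0; apply: (bni_notin i lt_in); exists 0.
    by rewrite b0 mulr0 expr0n; have -> : (n + i == 0)%N = false by lia.
  move=> [r Er]; apply: a_notin; exists (r - b ^+ (n + i - j).-1).
  by rewrite mulrBr -exprS prednK -?Er ?addrK //; lia.
- apply: (sat_layer_form_level (f := fun l => b ^+ (n + l))) => m.
  rewrite in_ideal2_addl (in_ideal2_exp dp_minimal_local) ?leq_add2l //.
  exact: bni_notin.
Qed.

End DpMinimal.


Theorem mainTheorem10 (R : idomainType) (hdp : dp_minimal R) :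
  (forall (P : R -> Prop), is_prime_ideal P -> forall a : R,
     (forall x, P x -> in_principal a x) \/ (forall x, in_principal a x -> P x))
  /\
  (exists N : nat, forall (M : R -> Prop), is_maximal_ideal M ->
     forall a b : R, M a -> M b -> in_principal b a \/ in_principal a (b ^+ N)).
Proof.
have [N dvd_or_exp] := dp_minimal_dvd_or_exp_dvd hdp.
split; first exact: prime_ideal_divided dvd_or_exp.
by exists N => M _ a b _ _; apply: dvd_or_exp.
Qed.
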